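(* Let $\mathcal{A}$ be a topological ring containing $\mathbb{Q}$ and let $(\mathcal{B}_n)_{n\in\mathbb{N}}$ be a countable inverse system of complete topological $\mathcal{A}$-algebras with continuous surjective transition homomorphisms $p_{m,n}\colon\mathcal{B}_m\to\mathcal{B}_n$ for $m\ge n\ge0$. Let $\mathcal{B}=\varprojlim_n\mathcal{B}_n$ with the inverse limit topology and let $p_n\colon\mathcal{B}\to\mathcal{B}_n$ be the canonical continuous projections. Let $\partial_n\colon\mathcal{B}_n\to\mathcal{B}_n$, $n\in\mathbb{N}$, be topologically integrable $\mathcal{A}$-derivations such that $\partial_n\circ p_{m,n}=p_{m,n}\circ\partial_m$ for all $m\ge n\ge0$. Then there exists a unique topologically integrable $\mathcal{A}$-derivation $\partial=\varprojlim_n\partial_n$ of $\mathcal{B}$ such that $\partial_n\circ p_n=p_n\circ\partial$ for every $n\in\mathbb{N}$.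
   Context: Conventions: topological rings are linearly topologized with a countable fundamental system of open ideals; homomorphisms are continuous; complete means the canonical map to $\varprojlim_{\mathfrak{a}}\mathcal{B}/\mathfrak{a}$ (open ideals, discrete quotients) is a topological isomorphism; a complete topological $\mathcal{A}$-algebra is a complete topological ring with a continuous homomorphism from $\mathcal{A}$. A continuous $\mathcal{A}$-derivation $\partial$ of $\mathcal{B}$ is a continuous $\mathcal{A}$-linear map $\mathcal{B}\to\mathcal{B}$ satisfying the Leibniz rule; it is topologically integrable if $(\partial^i)_{i\in\mathbb{N}}$ converges continuously to $0$: for every $b\in\mathcal{B}$ and every open ideal $\mathfrak{b}'$ there exist an open ideal $\mathfrak{b}$ and $n_0$ with $\partial^n(b+\mathfrak{b})\subseteq\mathfrak{b}'$ for all $n\ge n_0$. *)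

From mathcomp Require Import all_boot all_order all_algebra.
Unset Printing Implicit Defensive.
Import Order.TTheory GRing.Theory Num.Theory.
Local Open Scope ring_scope.

Definition is_ideal {R : pzRingType} (J : R -> Prop) : Prop :=
  [/\ J 0, (forall x y, J x -> J y -> J (x - y)) & (forall r x, J x -> J (r * x))].

(* A linear topology with a countable (decreasing) fundamental system of
   open ideals. *)
Record linTop (R : pzRingType) := LinTop {
  nbhd : nat -> R -> Prop;
  nbhd_ideal : forall n, is_ideal (nbhd n);
  nbhd_decr : forall n x, nbhd n.+1 x -> nbhd n x }.

Definition open_ideal {R : pzRingType} (T : linTop R) (J : R -> Prop) : Prop :=
  is_ideal J /\ exists n, forall x, nbhd R T n x -> J x.

Definition cont_gen {R1 R2 : Type} (sub1 : R1 -> R1 -> R1) (S1 : R1 -> Prop)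
  (O1 : (R1 -> Prop) -> Prop) (sub2 : R2 -> R2 -> R2) (O2 : (R2 -> Prop) -> Prop)
  (f : R1 -> R2) : Prop :=
  forall x, S1 x -> forall J, O2 J ->
    exists I, O1 I /\ forall y, S1 y -> I (sub1 y x) -> J (sub2 (f y) (f x)).

(* topological integrability: (d^i) converges continuously to 0 *)
Definition top_integrable {R : Type} (sub : R -> R -> R) (S : R -> Prop)
  (O : (R -> Prop) -> Prop) (d : R -> R) : Prop :=
  forall b, S b -> forall J', O J' ->
    exists J, O J /\ exists n0, forall n y, (n0 <= n)%N -> S y ->
      J (sub y b) -> J' (iter n d y).

Definition rsub {R : pzRingType} (x y : R) := x - y.

Definition continuous_lt {R1 R2 : pzRingType} (T1 : linTop R1) (T2 : linTop R2)
  (f : R1 -> R2) : Prop :=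
  cont_gen (@rsub R1) (fun _ => True) (open_ideal T1) (@rsub R2) (open_ideal T2) f.

(* completeness: canonical map R -> lim_{a open} R/a is bijective (it is then
   automatically a topological isomorphism).  An element of the inverse limit
   is represented by a compatible family of representatives x a of the
   classes in R/a. *)
Definition complete {R : pzRingType} (T : linTop R) : Prop :=
  (forall r, (forall J, open_ideal T J -> J r) -> r = 0) /\
  (forall x : (R -> Prop) -> R,
     (forall J J', open_ideal T J -> open_ideal T J' ->
        (forall y, J' y -> J y) -> J (x J' - x J)) ->
     exists r, forall J, open_ideal T J -> J (r - x J)).

Definition is_A_derivation {A R : pzRingType} (T : linTop R) (iota : A -> R)
  (d : R -> R) : Prop :=
  [/\ continuous_lt T T d,
      (forall x y, d (x + y) = d x + d y),
      (forall a x, d (iota a * x) = iota a * d x) &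
      (forall x y, d (x * y) = d x * y + x * d y)].

Definition is_rhom {R1 R2 : pzRingType} (f : R1 -> R2) : Prop :=
  [/\ f 1 = 1, (forall x y, f (x + y) = f x + f y) &
      (forall x y, f (x * y) = f x * f y)].

Section Limit.
Variables (A : pzRingType) (Bn : nat -> pzRingType).
Variable (T : forall n, linTop (Bn n)).
Variable (iota : forall n, A -> Bn n).
Variable (p : forall m n, Bn m -> Bn n).

Definition prodT := forall n, Bn n.

Definition in_lim (x : prodT) : Prop :=
  forall m n, (n <= m)%N -> p m n (x m) = x n.

Definition lzero : prodT := fun n => 0.
Definition ladd (x y : prodT) : prodT := fun n => x n + y n.
Definition lsub (x y : prodT) : prodT := fun n => x n - y n.
Definition lmul (x y : prodT) : prodT := fun n => x n * y n.
Definition liota (a : A) : prodT := fun n => iota n a.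

Definition lim_ideal (J : prodT -> Prop) : Prop :=
  [/\ J lzero,
      (forall x y, in_lim x -> in_lim y -> J x -> J y -> J (lsub x y)) &
      (forall r x, in_lim r -> in_lim x -> J x -> J (lmul r x))].

Definition lim_open (J : prodT -> Prop) : Prop :=
  lim_ideal J /\ exists n (J' : Bn n -> Prop), open_ideal (T n) J' /\
    forall x, in_lim x -> J' (x n) -> J x.

(* continuous A-derivation of B (only its values on B matter) *)
Definition lim_A_derivation (d : prodT -> prodT) : Prop :=
  [/\ (forall x, in_lim x -> in_lim (d x)),
      cont_gen lsub in_lim lim_open lsub lim_open d,
      (forall x y, in_lim x -> in_lim y -> forall n, d (ladd x y) n = d x n + d y n),
      (forall a x, in_lim x -> forall n, d (lmul (liota a) x) n = iota n a * d x n) &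
      (forall x y, in_lim x -> in_lim y ->
         forall n, d (lmul x y) n = d x n * y n + x n * d y n)].

Definition lim_top_integrable (d : prodT -> prodT) : Prop :=
  top_integrable lsub in_lim lim_open d.

End Limit.
Arguments in_lim {Bn} p x.
Arguments lim_open {Bn} T p J.
Arguments lim_A_derivation {A Bn} T iota p d.
Arguments lim_top_integrable {Bn} T p d.

From mathcomp Require Import all_boot all_order all_algebra.
Import GRing.Theory.
Local Open Scope ring_scope.

(* The limit derivation acts componentwise, [D x n = d_n (x n)]: the
   compatibility [d_n o p_mn = p_mn o d_m] keeps compatible families
   compatible, and every open ideal of the limit contains a pullback
   [p_n^-1 I] of an open ideal of a single [B_n], so continuity and
   topological integrability of [D] reduce to those of [d_n].  Uniqueness is
   forced by [D x n = d_n (x n)]. *)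

Lemma rhom_sub {R1 R2 : pzRingType} {f : R1 -> R2} :
  is_rhom f -> forall a b, f (a - b) = f a - f b.
Proof.
case=> _ fD _ a b.
by apply/eqP; rewrite eq_sym subr_eq -fD subrK.
Qed.

Section ComponentwiseMap.
Variables (Bn : nat -> pzRingType) (T : forall n, linTop (Bn n)).
Variable p : forall m n, Bn m -> Bn n.
Hypothesis p_rhom : forall m n, (n <= m)%N -> is_rhom (p m n).

Definition map_prodT (d : forall n, Bn n -> Bn n) : prodT Bn -> prodT Bn :=
  fun x n => d n (x n).

Lemma in_lim_sub x y : in_lim p x -> in_lim p y -> in_lim p (lsub Bn x y).
Proof.
move=> limx limy m n le_nm.
by rewrite /lsub (rhom_sub (p_rhom _ _ le_nm)) limx // limy.
Qed.

Lemma lim_open_pullback n (I : Bn n -> Prop) :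
  open_ideal (T n) I -> lim_open T p (fun z => I (z n)).
Proof.
move=> openI; have [[I0 Isub Imul] _] := openI.
split; last by exists n, I.
by split=> // [x y _ _|r x _ _]; [exact: Isub | exact: Imul].
Qed.

Variable d : forall n, Bn n -> Bn n.
Hypothesis d_comm : forall m n, (n <= m)%N -> forall x, d n (p m n x) = p m n (d m x).

Lemma in_lim_map_prodT x : in_lim p x -> in_lim p (map_prodT d x).
Proof. by move=> limx m n le_nm; rewrite /map_prodT -d_comm // limx. Qed.

Lemma iter_map_prodT k x n : iter k (map_prodT d) x n = iter k (d n) (x n).
Proof. by elim: k => //= k IHk; rewrite /map_prodT IHk. Qed.

Lemma in_lim_iter_map_prodT k x : in_lim p x -> in_lim p (iter k (map_prodT d) x).
Proof. by move=> limx; elim: k => //= k IHk; exact: in_lim_map_prodT. Qed.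

Lemma map_prodT_continuous :
  (forall n, continuous_lt (T n) (T n) (d n)) ->
  cont_gen (lsub Bn) (in_lim p) (lim_open T p) (lsub Bn) (lim_open T p) (map_prodT d).
Proof.
move=> d_cont x limx J [_ [n [J' [openJ' J'_J]]]].
have [I [openI IJ']] := d_cont n (x n) I J' openJ'.
exists (fun z => I (z n)); split; first exact: lim_open_pullback.
move=> y limy Iyx; apply: J'_J; last exact: IJ'.
by apply: in_lim_sub; exact: in_lim_map_prodT.
Qed.

Lemma map_prodT_top_integrable :
  (forall n, top_integrable (@rsub (Bn n)) (fun _ => True) (open_ideal (T n)) (d n)) ->
  lim_top_integrable T p (map_prodT d).
Proof.
move=> d_int b _ J [_ [n [J' [openJ' J'_J]]]].
have [I [openI [k0 Ik0]]] := d_int n (b n) I J' openJ'.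
exists (fun z => I (z n)); split; first exact: lim_open_pullback.
exists k0 => k y le_k0k limy Iyb; apply: J'_J; first exact: in_lim_iter_map_prodT.
by rewrite iter_map_prodT; exact: Ik0.
Qed.

Lemma map_prodT_A_derivation (A : pzRingType) (iota : forall n, A -> Bn n) :
  (forall n, is_A_derivation (T n) (iota n) (d n)) ->
  lim_A_derivation T iota p (map_prodT d).
Proof.
move=> d_der; split.
- exact: in_lim_map_prodT.
- by apply: map_prodT_continuous => n; case: (d_der n).
- by move=> x y _ _ n; case: (d_der n) => _ dD _ _; exact: dD.
- by move=> a x _ n; case: (d_der n) => _ _ dZ _; exact: dZ.
- by move=> x y _ _ n; case: (d_der n) => _ _ _ dM; exact: dM.
Qed.

End ComponentwiseMap.
Arguments map_prodT {Bn} d x n.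

Theorem proposition2p29
  (A : comPzRingType) (TA : linTop A)
  (HQ : exists f : {rmorphism rat -> A}, injective f)
  (Bn : nat -> comPzRingType) (T : forall n, linTop (Bn n))
  (iota : forall n, {rmorphism A -> Bn n})
  (Hiota : forall n, continuous_lt TA (T n) (iota n))
  (Hcompl : forall n, complete (T n))
  (p : forall m n, Bn m -> Bn n)
  (Hp_hom : forall m n, (n <= m)%N -> is_rhom (p m n))
  (Hp_alg : forall m n, (n <= m)%N -> forall a, p m n (iota m a) = iota n a)
  (Hp_cont : forall m n, (n <= m)%N -> continuous_lt (T m) (T n) (p m n))
  (Hp_surj : forall m n, (n <= m)%N -> forall y, exists x, p m n x = y)
  (Hp_id : forall n x, p n n x = x)
  (Hp_comp : forall m n k, (k <= n)%N -> (n <= m)%N ->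
                forall x, p n k (p m n x) = p m k x)
  (d : forall n, Bn n -> Bn n)
  (Hd : forall n, is_A_derivation (T n) (iota n) (d n))
  (Hd_int : forall n, top_integrable (@rsub (Bn n)) (fun _ => True)
                        (open_ideal (T n)) (d n))
  (Hd_comm : forall m n, (n <= m)%N -> forall x, d n (p m n x) = p m n (d m x)) :
  let lim := in_lim p in
  exists D : prodT Bn -> prodT Bn,
    [/\ lim_A_derivation T iota p D,
        lim_top_integrable T p D,
        (forall n x, lim x -> d n (x n) = D x n) &
        (forall D', lim_A_derivation T iota p D' -> lim_top_integrable T p D' ->
           (forall n x, lim x -> d n (x n) = D' x n) ->
           forall x, lim x -> forall n, D' x n = D x n)].
Proof.
move=> lim; exists (map_prodT d); split=> //.
- exact: map_prodT_A_derivation.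
- exact: map_prodT_top_integrable.
- by move=> D' _ _ D'_d x limx n; rewrite -D'_d.
Qed.
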